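(* Let $X$ be a finite set of proposals with $|X|\geq 3$. No divisiveness selection function on $X$ simultaneously satisfies Anonymity, Neutrality, Clone Consistency, and Position Unanimity.
   Context: $X!$ is the set of strict linear orders on $X$; a profile is a function $R:N\to X!$ with $N\subset\mathbb{N}$ finite and nonempty. A divisiveness selection function (DSF) maps every profile to a nonempty subset of $X$. Anonymity: $\Delta(R)=\Delta(R\circ\sigma)$ for every profile $R$ and every bijection $\sigma:\mathbb{N}\to\mathbb{N}$. Neutrality: $\Delta(\sigma(R))=\sigma(\Delta(R))$ for every profile $R$ and permutation $\sigma:X\to X$ (extended naturally to subsets of $X$ and to profiles). Two proposals are clones in $R$ if they are adjacent in every agent's ranking in $R$. Clone Consistency: for every profile $R$ and proposals $x,x',y$ such that $x,x'$ are clones in $R$ but $x,y$ are not, $\{x,y\}\subseteq\Delta(R)$ implies $\{x,x',y\}\subseteq\Delta(R)$. A profile is unanimous if all agents report the same ranking; $x$ occurs in the same position throughout $R$ if the number of proposals ranked above $x$ is the same in every ranking of $R$. Position Unanimity: $x\notin\Delta(R)$ for every non-unanimous profile $R$ and every proposal $x$ occurring in the same position throughout $R$. *)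

From mathcomp Require Import all_boot all_order.
From mathcomp Require Import perm.
Set Implicit Arguments. Unset Strict Implicit. Unset Printing Implicit Defensive.

Section Divisiveness.
Variable X : finType.

(* A strict linear order on X, given as a boolean relation r (r a b = "a is ranked above b"). *)
Definition strict_linear (r : rel X) : Prop :=
  [/\ forall a, ~~ r a a,
      forall a b c, r a b -> r b c -> r a c
    & forall a b, a != b -> r a b || r b a].

(* A raw profile: agent i reports Some r if i \in N, None otherwise. *)
Definition profile := nat -> option (rel X).

Definition is_profile (R : profile) : Prop :=
  [/\ exists n, forall i, n <= i -> R i = None,
      exists i, R i <> None
    & forall i r, R i = Some r -> strict_linear r].

Definition is_DSF (D : profile -> {set X}) : Prop :=
  forall R, is_profile R -> D R != set0.

Definition anonymous (D : profile -> {set X}) : Prop :=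
  forall R (s : nat -> nat), is_profile R -> bijective s -> D R = D (R \o s).

Definition perm_profile (s : {perm X}) (R : profile) : profile :=
  fun i => omap (fun r : rel X => fun a b => r ((s^-1)%g a) ((s^-1)%g b)) (R i).

Definition neutral (D : profile -> {set X}) : Prop :=
  forall R (s : {perm X}), is_profile R -> D (perm_profile s R) = s @: D R.

Definition adjacent (r : rel X) (x y : X) : Prop :=
  x != y /\ forall z, ~ ((r x z && r z y) || (r y z && r z x)).

Definition clones (R : profile) (x y : X) : Prop :=
  x != y /\ forall i r, R i = Some r -> adjacent r x y.

Definition clone_consistent (D : profile -> {set X}) : Prop :=
  forall R x x' y, is_profile R -> clones R x x' -> y != x -> ~ clones R x y ->
    x \in D R -> y \in D R -> [/\ x \in D R, x' \in D R & y \in D R].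

Definition unanimous (R : profile) : Prop :=
  forall i j r1 r2, R i = Some r1 -> R j = Some r2 -> r1 =2 r2.

Definition position (r : rel X) (x : X) : nat := #|[set y | r y x]|.

Definition same_position (R : profile) (x : X) : Prop :=
  forall i j r1 r2, R i = Some r1 -> R j = Some r2 -> position r1 x = position r2 x.

Definition position_unanimous (D : profile -> {set X}) : Prop :=
  forall R x, is_profile R -> ~ unanimous R -> same_position R x -> x \notin D R.

End Divisiveness.

(* Fix three proposals a, b, c and consider the two-agent profile R whose rankings are
   a > b > c > rest and its image under the transposition (a c), i.e. c > b > a > rest.
   R is not unanimous and every proposal other than a and c keeps its position, so by
   Position Unanimity Delta(R) is a subset of {a, c}.  Swapping a and c maps R to R with
   its two agents exchanged, so Neutrality and Anonymity make Delta(R) invariant under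
   (a c); being nonempty, it is {a, c}.  Now a and b are clones in R while a and c are
   not (b lies between them), so Clone Consistency forces b into Delta(R), contradicting
   Position Unanimity. *)

From mathcomp Require Import all_boot all_order perm zify.
From Stdlib Require Import FunctionalExtensionality.

Set Implicit Arguments. Unset Strict Implicit. Unset Printing Implicit Defensive.

Section Rankings.
Variable X : finType.

Definition rank_rel (f : X -> nat) : rel X := fun u v => f u < f v.

Lemma rank_rel_linear f : injective f -> strict_linear (rank_rel f).
Proof.
move=> f_inj; split; rewrite /rank_rel.
- by move=> x; rewrite ltnn.
- by move=> x y z; apply: ltn_trans.
- move=> x y xy; case: ltngtP => // /f_inj exy.
  by rewrite exy eqxx in xy.
Qed.

Lemma adjacentC (r : rel X) x y : adjacent r x y -> adjacent r y x.
Proof. by case=> xy between; split=> [|z]; rewrite 1?eq_sym // orbC. Qed.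

Lemma adjacent_rank_rel f x y : x != y -> f y = (f x).+1 -> adjacent (rank_rel f) x y.
Proof. by move=> xy fy; split=> // z; rewrite /rank_rel fy; lia. Qed.

Lemma rank_rel_not_adjacent f x y z :
  f x < f z < f y -> ~ adjacent (rank_rel f) x y.
Proof. by move=> /andP[xz zy] [_ /(_ z)]; rewrite /rank_rel xz zy. Qed.

Lemma position_rank_rel_comp f (t : {perm X}) x :
  t x = x -> position (rank_rel (f \o t)) x = position (rank_rel f) x.
Proof.
move=> tx; rewrite /position /rank_rel /= tx.
rewrite -(card_preimset [set y | f y < f x] (@perm_inj _ t)).
by apply: eq_card => y; rewrite !inE.
Qed.

Definition pair_profile (r1 r2 : rel X) : profile X :=
  fun i => match i with 0 => Some r1 | 1 => Some r2 | _ => None end.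

Section PairProfile.
Variables r1 r2 : rel X.

Lemma pair_profileP i r : pair_profile r1 r2 i = Some r -> r = r1 \/ r = r2.
Proof. by case: i => [|[|i]] //= -[<-]; [left | right]. Qed.

Lemma pair_profile_is_profile :
  strict_linear r1 -> strict_linear r2 -> is_profile (pair_profile r1 r2).
Proof.
move=> lin1 lin2; split; first by exists 2 => -[|[|i]].
- by exists 0.
- by move=> i r /pair_profileP[->|->].
Qed.

Lemma pair_profile_not_unanimous x y :
  r1 x y != r2 x y -> ~ unanimous (pair_profile r1 r2).
Proof. by move=> neq unan; rewrite (unan 0 1 r1 r2 erefl erefl) eqxx in neq. Qed.

Lemma same_position_pair x :
  position r1 x = position r2 x -> same_position (pair_profile r1 r2) x.
Proof. by move=> pos i j q1 q2 /pair_profileP[->|->] /pair_profileP[->|->]. Qed.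

Lemma clones_pair x y :
  x != y -> adjacent r1 x y -> adjacent r2 x y -> clones (pair_profile r1 r2) x y.
Proof. by move=> xy adj1 adj2; split=> // i r /pair_profileP[->|->]. Qed.

Lemma perm_pair_profile (s : {perm X}) :
  perm_profile s (pair_profile r1 r2) =
  pair_profile (fun u v => r1 ((s^-1)%g u) ((s^-1)%g v))
               (fun u v => r2 ((s^-1)%g u) ((s^-1)%g v)).
Proof. by apply: functional_extensionality => -[|[|i]]. Qed.

Lemma pair_profileC :
  exists2 sigma, bijective sigma & pair_profile r2 r1 = pair_profile r1 r2 \o sigma.
Proof.
pose sigma n := if n is 0 then 1 else if n is 1 then 0 else n.
exists sigma; first by exists sigma => -[|[|n]].
by apply: functional_extensionality => -[|[|i]].
Qed.

End PairProfile.
End Rankings.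

Section SwapProfile.
Variable X : finType.
Variable f : X -> nat.
Hypothesis f_inj : injective f.
Variables a b c : X.
Hypotheses (fb : f b = (f a).+1) (fc : f c = (f b).+1).

Definition swap_profile : profile X :=
  pair_profile (rank_rel f) (rank_rel (f \o tperm a c)).

Lemma consecutive_keys_neq : [/\ a != b, c != b & c != a].
Proof. by split; apply/eqP => eq_keys; move: fb fc; rewrite eq_keys; lia. Qed.

Let ab : a != b. Proof. by case: consecutive_keys_neq => ? ? _. Qed.
Let cb : c != b. Proof. by case: consecutive_keys_neq => ? ? _. Qed.

Lemma swap_profile_is_profile : is_profile swap_profile.
Proof.
apply: pair_profile_is_profile; apply: rank_rel_linear => //.
exact: inj_comp f_inj (@perm_inj _ _).
Qed.

Lemma swap_profile_not_unanimous : ~ unanimous swap_profile.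
Proof.
apply: (@pair_profile_not_unanimous _ _ _ a b).
by rewrite /rank_rel /= tpermL tpermD // fc fb; lia.
Qed.

Lemma same_position_swap_profile x : x != a -> x != c -> same_position swap_profile x.
Proof.
move=> xa xc; apply: same_position_pair; rewrite position_rank_rel_comp //.
by rewrite tpermD // eq_sym.
Qed.

Lemma clones_swap_profile : clones swap_profile a b.
Proof.
apply: clones_pair ab (adjacent_rank_rel ab fb) _.
by apply/adjacentC/adjacent_rank_rel; rewrite 1?eq_sym //= tpermL tpermD.
Qed.

Lemma not_clones_swap_profile : ~ clones swap_profile a c.
Proof.
case=> _ /(_ 0 _ erefl); apply: (@rank_rel_not_adjacent _ _ _ _ b).
by rewrite fc fb leqnn ltnSn.
Qed.

Lemma perm_swap_profile : exists2 sigma, bijective sigma &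
  perm_profile (tperm a c) swap_profile = swap_profile \o sigma.
Proof.
rewrite /swap_profile perm_pair_profile tpermV.
have -> : (fun u v => rank_rel (f \o tperm a c) (tperm a c u) (tperm a c v)) = rank_rel f.
  by do 2!apply: functional_extensionality => ?; rewrite /rank_rel /= !tpermK.
exact: pair_profileC.
Qed.

End SwapProfile.

Lemma exists_consecutive_keys (X : finType) : 3 <= #|X| ->
  exists (f : X -> nat) (a b c : X), [/\ injective f, f b = (f a).+1 & f c = (f b).+1].
Proof.
move=> lt2; have lt1 := ltnW lt2; have lt0 := ltnW lt1.
exists (fun x => nat_of_ord (enum_rank x)).
exists (enum_val (Ordinal lt0)), (enum_val (Ordinal lt1)), (enum_val (Ordinal lt2)).
by split; rewrite ?enum_valK // => x y /val_inj/enum_rank_inj.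
Qed.

Lemma set_tperm_invariant (T : finType) (A : {set T}) x y :
  A != set0 -> A \subset [set x; y] -> tperm x y @: A = A -> x \in A /\ y \in A.
Proof.
case/set0Pn => z zA /subsetP/(_ z zA) + invA.
have : tperm x y z \in A by rewrite -invA imset_f.
by rewrite !inE => + /orP[]/eqP ez; move: zA; rewrite ez ?tpermL ?tpermR.
Qed.

Section DivisivenessAxioms.
Variable X : finType.
Variable D : profile X -> {set X}.

Lemma anonymous_neutral_invariant (s : {perm X}) R :
  anonymous D -> neutral D -> is_profile R ->
  (exists2 sigma, bijective sigma & perm_profile s R = R \o sigma) ->
  s @: D R = D R.
Proof. by move=> anon neut R_prof [sigma sigma_bij eqR]; rewrite -neut // eqR -anon. Qed.

Lemma position_unanimous_subset R (S : {set X}) :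
  position_unanimous D -> is_profile R -> ~ unanimous R ->
  (forall x, x \notin S -> same_position R x) -> D R \subset S.
Proof.
move=> pu R_prof nonunan same_pos; apply/subsetP => x xD; apply/negPn/negP => xS.
by move: xD; apply/negP/pu => //; apply: same_pos.
Qed.

End DivisivenessAxioms.

Theorem theorem3 (X : finType) (H3 : 3 <= #|X|) (D : profile X -> {set X}) :
  ~ [/\ is_DSF D, anonymous D, neutral D, clone_consistent D & position_unanimous D].
Proof.
move=> [dsf anon neut cc pu].
have [f [a [b [c [f_inj fb fc]]]]] := exists_consecutive_keys H3.
have [ab cb ca] := consecutive_keys_neq fb fc.
pose R := swap_profile f a c.
have R_prof : is_profile R := swap_profile_is_profile f_inj a c.
have nonunan : ~ unanimous R := swap_profile_not_unanimous fb fc.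
have DR_ac : D R \subset [set a; c].
  apply: position_unanimous_subset => // x; rewrite !inE negb_or => /andP[xa xc].
  exact: same_position_swap_profile.
have [aD cD] : a \in D R /\ c \in D R.
  apply: set_tperm_invariant (dsf _ R_prof) DR_ac _.
  exact: anonymous_neutral_invariant (perm_swap_profile f a c).
have [_ bD _] := cc _ _ _ _ R_prof (clones_swap_profile fb fc) ca
  (not_clones_swap_profile fb fc) aD cD.
move: bD; apply/negP/pu => //.
by apply: same_position_swap_profile; rewrite 1?eq_sym.
Qed.
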